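(* For all complex $q$ with $|q|<1$, $$F^{\rm ed}_{\rm od}(-q)=-\frac{q\,(q;q)_\infty(-q^2;q^2)_\infty}{(q^2;q^2)_\infty^2}\sum_{n=0}^\infty\sum_{m=0}^\infty(-1)^m q^{\frac{n(n+3)}{2}+2nm+2m^2+2m}\left(1+q^{2m+1}\right).$$
   Context: For $n\in\mathbb N_0\cup\{\infty\}$, $(a;q)_n:=\prod_{j=0}^{n-1}(1-aq^j)$. Define $$F^{\rm ed}_{\rm od}(q):=\sum_{n=0}^\infty q^{2n+1}(-q;q^2)_n(-q^{2n+2};q^2)_\infty,$$ and $F^{\rm ed}_{\rm od}(-q)$ denotes this function evaluated at $-q$. *)

From Stdlib Require Import Reals Lra Lia ClassicalEpsilon.
Open Scope R_scope.

Definition Cpx : Type := (R * R)%type.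
Definition Cz0 : Cpx := (0, 0).
Definition Cone : Cpx := (1, 0).
Definition Cadd (z w : Cpx) : Cpx := (fst z + fst w, snd z + snd w).
Definition Copp (z : Cpx) : Cpx := (- fst z, - snd z).
Definition Csub (z w : Cpx) : Cpx := Cadd z (Copp w).
Definition Cmul (z w : Cpx) : Cpx :=
  (fst z * fst w - snd z * snd w, fst z * snd w + snd z * fst w).
Definition Cinv (z : Cpx) : Cpx :=
  (fst z / (fst z ^ 2 + snd z ^ 2), - snd z / (fst z ^ 2 + snd z ^ 2)).
Definition Cdiv (z w : Cpx) : Cpx := Cmul z (Cinv w).
Definition Cnorm (z : Cpx) : R := sqrt (fst z ^ 2 + snd z ^ 2).
Fixpoint Cpow (z : Cpx) (n : nat) : Cpx :=
  match n with O => Cone | S k => Cmul z (Cpow z k) end.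

Definition C_cv (u : nat -> Cpx) (l : Cpx) : Prop :=
  forall eps : R, eps > 0 -> exists N : nat, forall n : nat, (n >= N)%nat ->
    Cnorm (Csub (u n) l) < eps.

(* the limit of a sequence (chosen by classical choice; Cz0 if none exists) *)
Definition Clim (u : nat -> Cpx) : Cpx :=
  epsilon (inhabits Cz0) (fun l => C_cv u l).

Fixpoint Cpsum (f : nat -> Cpx) (n : nat) : Cpx :=
  match n with O => Cz0 | S k => Cadd (Cpsum f k) (f k) end.
Definition Csum (f : nat -> Cpx) : Cpx := Clim (Cpsum f).

Fixpoint qpoch (a q : Cpx) (n : nat) : Cpx :=
  match n with O => Cone | S k => Cmul (qpoch a q k) (Csub Cone (Cmul a (Cpow q k))) end.
Definition qpoch_inf (a q : Cpx) : Cpx := Clim (qpoch a q).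

Definition F_ed_od (q : Cpx) : Cpx :=
  Csum (fun n => Cmul (Cpow q (2 * n + 1))
                  (Cmul (qpoch (Copp q) (Cpow q 2) n)
                        (qpoch_inf (Copp (Cpow q (2 * n + 2))) (Cpow q 2)))).

From Stdlib Require Import Reals Lra Lia ClassicalEpsilon FunctionalExtensionality.
From Coquelicot Require Import Coquelicot.
From Pilot Require Import Defs.
Open Scope R_scope.

(* The left side telescopes: with [D k = (q;q^2)_k (-q^(2k);q^2)_oo], the [n]-th term of [F(-q)]
   is [-q/(1+q) (D n - D (n+1))], hence [F(-q) = -q/(1+q) (2 (-q^2;q^2)_oo - (q;q^2)_oo)].
   On the right, the inner sum over [m] is [q^(n(n+3)/2) (g (n+1) + q g (n+2))], where
   [g j = sum_m (-1)^m q^(2m^2+2jm)] satisfies [g j = 1 - q^(2j+2) g (j+2)]; this makes the outer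
   sum telescope to [(2 psi(q) + 1 - 2 G(q)) / (1+q)], with [psi(q) = sum_j q^(j(j+1)/2)] and
   [G(q) = sum_(j>=0) (-1)^j q^(2j^2)]. Gauss's identities [psi(q) (q;q^2)_oo = (q^2;q^2)_oo] and
   [(2 G(q) - 1) (-q^2;q^2)_oo = (q^2;q^2)_oo], obtained as limits (by Tannery's theorem) of finite
   forms of Rothe's q-binomial theorem, together with Euler's [(q;q^2)_oo (-q;q)_oo = 1], then
   identify the two sides. *)

Lemma pow_le_1 (x : R) (n : nat) : 0 <= x <= 1 -> x ^ n <= 1.
Proof. intro hx. rewrite <- (pow1 n). apply pow_incr. lra. Qed.

Lemma pow_le_pow_le_1 (x : R) (m n : nat) : 0 <= x <= 1 -> (n <= m)%nat -> x ^ m <= x ^ n.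
Proof.
  intros hx hnm. replace m with (n + (m - n))%nat by lia. rewrite pow_add.
  pose proof (pow_le x n ltac:(lra)). pose proof (pow_le_1 x (m - n) hx). nra.
Qed.

Lemma exp_le_exp (x y : R) : x <= y -> exp x <= exp y.
Proof. intros [h | ->]; [left; now apply exp_increasing | lra]. Qed.

Lemma Cmod_sub_sym (a b : C) : Cmod (a - b)%C = Cmod (b - a)%C.
Proof. replace (a - b)%C with (- (b - a))%C by ring. apply Cmod_opp. Qed.

Lemma Cmod_sub_triangle (a b c : C) : Cmod (a - c)%C <= Cmod (a - b)%C + Cmod (b - c)%C.
Proof. replace (a - c)%C with ((a - b) + (b - c))%C by ring. apply Cmod_triangle. Qed.

Lemma Cmod_sub_ge (a b : C) : Cmod a - Cmod b <= Cmod (a - b)%C.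
Proof.
  pose proof (Cmod_sub_triangle a b 0) as h.
  replace (a - 0)%C with a in h by ring. replace (b - 0)%C with b in h by ring. lra.
Qed.

Lemma Cmod_m1_pow (n : nat) : Cmod ((- 1) ^ n)%C = 1.
Proof.
  rewrite Cmod_pow. replace (Cmod (- 1)%C) with 1; [apply pow1 |].
  rewrite Cmod_R, Rabs_left; lra.
Qed.

Lemma Cmod_pow_S_lt_1 (q : C) (n : nat) : Cmod q < 1 -> Cmod (q ^ S n)%C < 1.
Proof. intro h. rewrite Cmod_pow. pose proof (Cmod_ge_0 q). apply pow_lt_1_compat; [lra | lia]. Qed.

Lemma Cmult_reg_l (c x y : C) : c <> RtoC 0 -> (c * x = c * y)%C -> x = y.
Proof. intros hc h. replace x with (/ c * (c * x))%C by (field; auto). rewrite h. field. auto. Qed.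

Lemma geom_eventually_lt (K r e : R) : 0 <= r < 1 -> e > 0 ->
  exists N, forall n, (n >= N)%nat -> K * r ^ n < e.
Proof.
  intros hr he. destruct (Rle_lt_dec K 0) as [hK | hK].
  - exists O. intros n _. pose proof (pow_le r n ltac:(lra)). nra.
  - destruct (pow_lt_1_zero r ltac:(rewrite Rabs_right; lra) (e / K)) as [N HN].
    { now apply Rdiv_lt_0_compat. }
    exists N. intros n hn. specialize (HN n hn).
    rewrite Rabs_right in HN by (apply Rle_ge, pow_le; lra).
    apply (Rmult_lt_compat_l K) in HN; [| exact hK].
    replace (K * (e / K)) with e in HN by (field; lra). exact HN.
Qed.

(** * Limits of complex sequences *)

Definition is_lim_Cseq (u : nat -> C) (l : C) : Prop :=
  forall eps : R, eps > 0 ->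
    exists N : nat, forall n : nat, (n >= N)%nat -> Cmod (u n - l)%C < eps.

Lemma is_lim_Cseq_unique (u : nat -> C) (a b : C) :
  is_lim_Cseq u a -> is_lim_Cseq u b -> a = b.
Proof.
  intros Ha Hb.
  assert (Hab : (a - b)%C = RtoC 0).
  2: { replace a with ((a - b) + b)%C by ring. rewrite Hab. ring. }
  apply Cmod_eq_0.
  destruct (Rle_lt_or_eq_dec 0 _ (Cmod_ge_0 (a - b))) as [h | h]; [| auto].
  set (e := Cmod (a - b)%C) in h.
  destruct (Ha (e / 2)) as [N1 H1]; [lra |]. destruct (Hb (e / 2)) as [N2 H2]; [lra |].
  specialize (H1 (N1 + N2)%nat ltac:(lia)). specialize (H2 (N1 + N2)%nat ltac:(lia)).
  pose proof (Cmod_sub_triangle a (u (N1 + N2)%nat) b).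
  rewrite Cmod_sub_sym in H1. fold e in H. lra.
Qed.

Lemma Clim_correct (u : nat -> C) (l : C) : is_lim_Cseq u l -> Clim u = l.
Proof.
  intro H. apply (is_lim_Cseq_unique u); [| exact H].
  apply (epsilon_spec (inhabits Cz0) (fun l => C_cv u l)). now exists l.
Qed.

Lemma is_lim_Cseq_ext_loc (u v : nat -> C) (l : C) (M : nat) :
  (forall n, (n >= M)%nat -> u n = v n) -> is_lim_Cseq u l -> is_lim_Cseq v l.
Proof.
  intros E H e he. destruct (H e he) as [N HN]. exists (N + M)%nat. intros n hn.
  rewrite <- E by lia. apply HN; lia.
Qed.

Lemma is_lim_Cseq_ext (u v : nat -> C) (l : C) :
  (forall n, u n = v n) -> is_lim_Cseq u l -> is_lim_Cseq v l.
Proof. intro E. apply (is_lim_Cseq_ext_loc u v l O). auto. Qed.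

Lemma is_lim_Cseq_const (c : C) : is_lim_Cseq (fun _ => c) c.
Proof.
  intros e he. exists O. intros. replace (c - c)%C with (RtoC 0) by ring. rewrite Cmod_0. lra.
Qed.

Lemma is_lim_Cseq_plus (u v : nat -> C) (a b : C) :
  is_lim_Cseq u a -> is_lim_Cseq v b -> is_lim_Cseq (fun n => u n + v n)%C (a + b)%C.
Proof.
  intros Hu Hv e he.
  destruct (Hu (e / 2)) as [N1 H1]; [lra |]. destruct (Hv (e / 2)) as [N2 H2]; [lra |].
  exists (N1 + N2)%nat. intros n hn.
  replace (u n + v n - (a + b))%C with ((u n - a) + (v n - b))%C by ring.
  specialize (H1 n ltac:(lia)). specialize (H2 n ltac:(lia)).
  pose proof (Cmod_triangle (u n - a) (v n - b)). lra.
Qed.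

Lemma is_lim_Cseq_opp (u : nat -> C) (a : C) :
  is_lim_Cseq u a -> is_lim_Cseq (fun n => - u n)%C (- a)%C.
Proof.
  intros Hu e he. destruct (Hu e he) as [N H]. exists N. intros n hn.
  replace (- u n - - a)%C with (- (u n - a))%C by ring. rewrite Cmod_opp. auto.
Qed.

Lemma is_lim_Cseq_minus (u v : nat -> C) (a b : C) :
  is_lim_Cseq u a -> is_lim_Cseq v b -> is_lim_Cseq (fun n => u n - v n)%C (a - b)%C.
Proof. intros. apply is_lim_Cseq_plus, is_lim_Cseq_opp; auto. Qed.

Lemma is_lim_Cseq_bounded (u : nat -> C) (a : C) :
  is_lim_Cseq u a -> exists M, M > 0 /\ forall n, Cmod (u n) <= M.
Proof.
  intro H. destruct (H 1 ltac:(lra)) as [N HN].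
  assert (Hfin : exists M, M > 0 /\ forall n, (n < N)%nat -> Cmod (u n) <= M).
  { clear HN. induction N as [| N [M [hM HM]]].
    - exists 1. split; [lra | intros; lia].
    - exists (M + Cmod (u N)). pose proof (Cmod_ge_0 (u N)). split; [lra |].
      intros n hn. destruct (Nat.eq_dec n N) as [-> | ne]; [lra |].
      pose proof (HM n ltac:(lia)). lra. }
  destruct Hfin as [M [hM HM]]. pose proof (Cmod_ge_0 a).
  exists (M + Cmod a + 1). split; [lra |]. intro n.
  destruct (Nat.lt_ge_cases n N) as [h | h].
  - pose proof (HM n h). lra.
  - specialize (HN n h). pose proof (Cmod_sub_ge (u n) a). lra.
Qed.

Lemma is_lim_Cseq_mult (u v : nat -> C) (a b : C) :
  is_lim_Cseq u a -> is_lim_Cseq v b -> is_lim_Cseq (fun n => u n * v n)%C (a * b)%C.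
Proof.
  intros Hu Hv. destruct (is_lim_Cseq_bounded u a Hu) as [M [HM HMb]].
  intros e he. set (K := Cmod b + 1).
  assert (HK : K > 0) by (unfold K; pose proof (Cmod_ge_0 b); lra).
  destruct (Hu (e / (2 * K))) as [N1 H1]. { apply Rdiv_lt_0_compat; lra. }
  destruct (Hv (e / (2 * M))) as [N2 H2]. { apply Rdiv_lt_0_compat; lra. }
  exists (N1 + N2)%nat. intros n hn.
  replace (u n * v n - a * b)%C with (u n * (v n - b) + (u n - a) * b)%C by ring.
  eapply Rle_lt_trans; [apply Cmod_triangle |]. rewrite !Cmod_mult.
  specialize (H1 n ltac:(lia)). specialize (H2 n ltac:(lia)). specialize (HMb n).
  pose proof (Cmod_ge_0 (v n - b)). pose proof (Cmod_ge_0 (u n - a)). pose proof (Cmod_ge_0 b).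
  assert (A1 : Cmod (u n) * Cmod (v n - b)%C < e / 2).
  { apply Rle_lt_trans with (M * Cmod (v n - b)%C); [now apply Rmult_le_compat_r |].
    replace (e / 2) with (M * (e / (2 * M))) by (field; lra). now apply Rmult_lt_compat_l. }
  assert (A2 : Cmod (u n - a)%C * Cmod b <= e / 2).
  { replace (e / 2) with (e / (2 * K) * K) by (field; lra).
    apply Rmult_le_compat; try lra. unfold K; lra. }
  lra.
Qed.

Lemma is_lim_Cseq_scal (c : C) (u : nat -> C) (a : C) :
  is_lim_Cseq u a -> is_lim_Cseq (fun n => c * u n)%C (c * a)%C.
Proof. intro H. apply is_lim_Cseq_mult; [apply is_lim_Cseq_const | exact H]. Qed.

Lemma is_lim_Cseq_inv (u : nat -> C) (a : C) :
  is_lim_Cseq u a -> a <> RtoC 0 -> is_lim_Cseq (fun n => / u n)%C (/ a)%C.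
Proof.
  intros Hu Ha e he.
  assert (Hm : Cmod a > 0) by now apply Cmod_gt_0.
  destruct (Hu (Cmod a / 2)) as [N1 H1]; [lra |].
  destruct (Hu (e * (Cmod a * Cmod a) / 2)) as [N2 H2].
  { apply Rmult_lt_0_compat; [| lra]. apply Rmult_lt_0_compat; nra. }
  exists (N1 + N2)%nat. intros n hn. specialize (H1 n ltac:(lia)). specialize (H2 n ltac:(lia)).
  assert (Hun : Cmod (u n) >= Cmod a / 2).
  { pose proof (Cmod_sub_ge a (u n)). rewrite Cmod_sub_sym in H1. lra. }
  assert (hun : u n <> RtoC 0). { intro h. rewrite h, Cmod_0 in Hun. lra. }
  replace (/ u n - / a)%C with (- (u n - a) / (u n * a))%C by (field; auto).
  rewrite Cmod_div by (apply Cmult_neq_0; auto). rewrite Cmod_opp, Cmod_mult.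
  apply Rlt_le_trans with ((e * (Cmod a * Cmod a) / 2) / (Cmod a / 2 * Cmod a)).
  - unfold Rdiv. apply Rle_lt_trans with (Cmod (u n - a)%C * / (Cmod a / 2 * Cmod a)).
    + apply Rmult_le_compat_l; [apply Cmod_ge_0 |]. apply Rinv_le_contravar.
      * apply Rmult_lt_0_compat; lra.
      * apply Rmult_le_compat_r; lra.
    + apply Rmult_lt_compat_r; [| exact H2]. apply Rinv_0_lt_compat, Rmult_lt_0_compat; lra.
  - right. field. lra.
Qed.

Lemma is_lim_Cseq_div (u v : nat -> C) (a b : C) :
  is_lim_Cseq u a -> is_lim_Cseq v b -> b <> RtoC 0 ->
  is_lim_Cseq (fun n => u n / v n)%C (a / b)%C.
Proof. intros. apply is_lim_Cseq_mult, is_lim_Cseq_inv; auto. Qed.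

Definition tends_to_infty (h : nat -> nat) : Prop :=
  forall M, exists N, forall n, (n >= N)%nat -> (h n >= M)%nat.

Lemma tends_to_infty_ge (h : nat -> nat) : (forall n, (h n >= n)%nat) -> tends_to_infty h.
Proof. intros H M. exists M. intros n hn. specialize (H n). lia. Qed.

Lemma is_lim_Cseq_subseq (u : nat -> C) (l : C) (h : nat -> nat) :
  tends_to_infty h -> is_lim_Cseq u l -> is_lim_Cseq (fun n => u (h n)) l.
Proof.
  intros Hh H e he. destruct (H e he) as [N HN]. destruct (Hh N) as [N0 H0].
  exists N0. intros n hn. apply HN, H0, hn.
Qed.

Lemma is_lim_Cseq_incr_1 (u : nat -> C) (l : C) :
  is_lim_Cseq u l -> is_lim_Cseq (fun n => u (S n)) l.
Proof. apply is_lim_Cseq_subseq, tends_to_infty_ge. intro; lia. Qed.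

Lemma is_lim_Cseq_le (u : nat -> C) (a c : C) (B : R) (M : nat) :
  is_lim_Cseq u a -> (forall n, (n >= M)%nat -> Cmod (u n - c)%C <= B) -> Cmod (a - c)%C <= B.
Proof.
  intros H HB. apply Rnot_lt_le. intro hc.
  destruct (H (Cmod (a - c)%C - B)) as [N HN]; [lra |].
  specialize (HN (N + M)%nat ltac:(lia)). specialize (HB (N + M)%nat ltac:(lia)).
  pose proof (Cmod_sub_triangle a (u (N + M)%nat) c). rewrite Cmod_sub_sym in HN. lra.
Qed.

Lemma is_lim_Cseq_Cmod_ge (u : nat -> C) (a : C) (c : R) :
  is_lim_Cseq u a -> (forall n, Cmod (u n) >= c) -> Cmod a >= c.
Proof.
  intros H HB. apply Rnot_lt_ge. intro hc.
  destruct (H (c - Cmod a)) as [N HN]; [lra |]. specialize (HN N ltac:(lia)).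
  pose proof (Cmod_sub_ge (u N) a). specialize (HB N). lra.
Qed.

Lemma is_lim_Cseq_geom (u : nat -> C) (l : C) (K r : R) : 0 <= r < 1 ->
  (forall n, Cmod (u n - l)%C <= K * r ^ n) -> is_lim_Cseq u l.
Proof.
  intros hr H e he. destruct (geom_eventually_lt K r e hr he) as [N HN].
  exists N. intros n hn. eapply Rle_lt_trans; [apply H | apply HN, hn].
Qed.

Lemma Cauchy_is_lim_Cseq (u : nat -> C) :
  (forall e, e > 0 -> exists N, forall n m, (n >= N)%nat -> (m >= N)%nat -> Cmod (u n - u m)%C < e) ->
  exists l, is_lim_Cseq u l.
Proof.
  intro H.
  assert (Hcomp : forall z : C, Rabs (fst z) <= Cmod z /\ Rabs (snd z) <= Cmod z).
  { intro z. pose proof (Rmax_Cmod z). pose proof (Rmax_l (Rabs (fst z)) (Rabs (snd z))).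
    pose proof (Rmax_r (Rabs (fst z)) (Rabs (snd z))). lra. }
  assert (H1 : Cauchy_crit (fun n => fst (u n))).
  { intros e he. destruct (H e he) as [N HN]. exists N. intros n m hn hm.
    apply (Rle_lt_trans _ _ _ (proj1 (Hcomp (u n - u m)%C))), HN; auto. }
  assert (H2 : Cauchy_crit (fun n => snd (u n))).
  { intros e he. destruct (H e he) as [N HN]. exists N. intros n m hn hm.
    apply (Rle_lt_trans _ _ _ (proj2 (Hcomp (u n - u m)%C))), HN; auto. }
  destruct (Rcomplete.R_complete _ H1) as [l1 L1].
  destruct (Rcomplete.R_complete _ H2) as [l2 L2].
  exists (l1, l2). intros e he.
  destruct (L1 (e / 2)) as [N1 K1]; [lra |]. destruct (L2 (e / 2)) as [N2 K2]; [lra |].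
  exists (N1 + N2)%nat. intros n hn. specialize (K1 n ltac:(lia)). specialize (K2 n ltac:(lia)).
  unfold Rdist in *.
  apply Rle_lt_trans with (Rabs (fst (u n) - l1) + Rabs (snd (u n) - l2)); [| lra].
  replace (u n - (l1, l2))%C with (RtoC (fst (u n) - l1) + Ci * RtoC (snd (u n) - l2))%C
    by (apply injective_projections; simpl; ring).
  eapply Rle_trans; [apply Cmod_triangle |].
  rewrite Cmod_mult, Cmod_Ci, !Cmod_R. lra.
Qed.

(** * Finite sums and series *)

(* [psum], [series], [poch] and [poch_inf] are C-valued copies of [Cpsum], [Csum], [qpoch] and
   [qpoch_inf]; they are convertible to them, but [ring] and [field] only handle terms whose type
   is syntactically [C]. *)
Fixpoint psum (f : nat -> C) (n : nat) : C :=
  match n with O => RtoC 0 | S k => (psum f k + f k)%C end.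

Definition series (f : nat -> C) : C := Clim (psum f).

Definition is_Cseries (f : nat -> C) (l : C) : Prop := is_lim_Cseq (psum f) l.

Lemma Csum_series : Csum = series.
Proof. reflexivity. Qed.

Lemma Cpow_Defs : Defs.Cpow = Complex.Cpow.
Proof. reflexivity. Qed.

Lemma series_correct (f : nat -> C) (l : C) : is_Cseries f l -> series f = l.
Proof. apply Clim_correct. Qed.

Lemma psum_S (f : nat -> C) (n : nat) : psum f (S n) = (psum f n + f n)%C.
Proof. reflexivity. Qed.

Lemma psum_ext (f g : nat -> C) (n : nat) :
  (forall i, (i < n)%nat -> f i = g i) -> psum f n = psum g n.
Proof.
  induction n; intro H; [reflexivity |].
  rewrite !psum_S, IHn, H; [reflexivity | lia | intros; apply H; lia].
Qed.

Lemma psum_first (f : nat -> C) (n : nat) :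
  psum f (S n) = (f O + psum (fun i => f (S i)) n)%C.
Proof. induction n; simpl; [ring |]. rewrite <- psum_S, IHn. simpl. ring. Qed.

Lemma psum_plus (f g : nat -> C) (n : nat) :
  psum (fun i => f i + g i)%C n = (psum f n + psum g n)%C.
Proof. induction n; simpl; [ring |]. rewrite IHn. ring. Qed.

Lemma psum_scal (c : C) (f : nat -> C) (n : nat) :
  psum (fun i => c * f i)%C n = (c * psum f n)%C.
Proof. induction n; simpl; [ring |]. rewrite IHn. ring. Qed.

Lemma psum_split (f : nat -> C) (m n : nat) :
  psum f (m + n) = (psum f m + psum (fun i => f (m + i)%nat) n)%C.
Proof.
  induction n; [rewrite Nat.add_0_r; simpl; ring |].
  rewrite Nat.add_succ_r, !psum_S, IHn. ring.
Qed.

Lemma psum_rev (f : nat -> C) (n : nat) : psum f n = psum (fun i => f (n - 1 - i)%nat) n.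
Proof.
  induction n as [| n IHn] in f |- *; [reflexivity |].
  rewrite psum_first, psum_S, (IHn (fun i => f (S i))).
  replace (S n - 1 - n)%nat with O by lia.
  rewrite (psum_ext (fun i => f (S (n - 1 - i))) (fun i => f (S n - 1 - i)%nat)); [ring |].
  intros i hi. f_equal. lia.
Qed.

Lemma psum_telescope (u : nat -> C) (n : nat) :
  psum (fun i => u (S i) - u i)%C n = (u n - u O)%C.
Proof. induction n; simpl; [ring |]. rewrite IHn. ring. Qed.

Lemma is_lim_Cseq_psum (a : nat -> nat -> C) (b : nat -> C) (J : nat) :
  (forall j, is_lim_Cseq (fun N => a N j) (b j)) ->
  is_lim_Cseq (fun N => psum (a N) J) (psum b J).
Proof.
  intro H. induction J; [apply (is_lim_Cseq_const (RtoC 0)) | now apply is_lim_Cseq_plus].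
Qed.

Section GeometricBounds.

Variable r : R.
Hypothesis hr : 0 <= r < 1.

Lemma psum_Cmod_geom (K : R) (f : nat -> C) (n : nat) :
  (forall i, Cmod (f i) <= K * r ^ i) -> Cmod (psum f n) <= K / (1 - r).
Proof.
  intro H.
  assert (Hn : forall n, Cmod (psum f n) <= K * (1 - r ^ n) / (1 - r)).
  { induction n0.
    - simpl. change Cz0 with (RtoC 0). rewrite Cmod_0. right. field. lra.
    - rewrite psum_S. eapply Rle_trans; [apply Cmod_triangle |].
      replace (K * (1 - r ^ S n0) / (1 - r)) with (K * (1 - r ^ n0) / (1 - r) + K * r ^ n0)
        by (simpl; field; lra).
      specialize (H n0). lra. }
  assert (HK : 0 <= K). { specialize (H O). simpl in H. pose proof (Cmod_ge_0 (f O)). lra. }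
  eapply Rle_trans; [apply Hn |]. unfold Rdiv. apply Rmult_le_compat_r.
  - left. apply Rinv_0_lt_compat. lra.
  - pose proof (pow_le r n ltac:(lra)). nra.
Qed.

Lemma is_lim_Cseq_geom_diff (K : R) (u : nat -> C) :
  (forall n, Cmod (u (S n) - u n)%C <= K * r ^ n) -> exists l, is_lim_Cseq u l.
Proof.
  intro H.
  assert (HB : forall n k, Cmod (u (n + k)%nat - u n)%C <= (K * r ^ n / (1 - r))).
  { intros n k. rewrite <- (Nat.add_0_r n) at 2.
    rewrite <- (psum_telescope (fun i => u (n + i)%nat)).
    apply (psum_Cmod_geom (K * r ^ n)). intro i. rewrite Nat.add_succ_r.
    eapply Rle_trans; [apply H |]. rewrite pow_add. right. ring. }
  apply Cauchy_is_lim_Cseq. intros e he.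
  destruct (geom_eventually_lt (K / (1 - r)) r (e / 2) hr ltac:(lra)) as [N HN].
  exists N. intros n m hn hm.
  assert (Hp : forall p, (p >= N)%nat -> Cmod (u p - u N)%C < e / 2).
  { intros p hp. replace p with (N + (p - N))%nat by lia.
    eapply Rle_lt_trans; [apply HB |]. specialize (HN N (le_n N)).
    replace (K * r ^ N / (1 - r)) with (K / (1 - r) * r ^ N) by (field; lra). exact HN. }
  pose proof (Hp n hn). pose proof (Hp m hm).
  pose proof (Cmod_sub_triangle (u n) (u N) (u m)). rewrite (Cmod_sub_sym (u N)) in H2. lra.
Qed.

Lemma is_Cseries_geom (K : R) (f : nat -> C) :
  (forall i, Cmod (f i) <= K * r ^ i) -> is_Cseries f (series f).
Proof.
  intro H. destruct (is_lim_Cseq_geom_diff K (psum f)) as [l Hl].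
  { intro n. rewrite psum_S. replace (psum f n + f n - psum f n)%C with (f n) by ring. apply H. }
  now rewrite (series_correct f l Hl).
Qed.

Lemma series_Cmod_geom (K : R) (f : nat -> C) :
  (forall i, Cmod (f i) <= K * r ^ i) -> Cmod (series f) <= K / (1 - r).
Proof.
  intro H. replace (series f) with (series f - 0)%C by ring.
  apply (is_lim_Cseq_le _ _ _ _ O (is_Cseries_geom K f H)). intros n _.
  replace (psum f n - 0)%C with (psum f n) by ring. now apply (psum_Cmod_geom K).
Qed.

Lemma tannery (K : R) (a : nat -> nat -> C) (b : nat -> C) (h : nat -> nat) :
  tends_to_infty h ->
  (forall N j, Cmod (a N j) <= K * r ^ j) -> (forall j, is_lim_Cseq (fun N => a N j) (b j)) ->
  is_lim_Cseq (fun N => psum (a N) (h N)) (series b).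
Proof.
  intros Hh HA HC.
  assert (HBb : forall j, Cmod (b j) <= K * r ^ j).
  { intro j. replace (b j) with (b j - 0)%C by ring.
    apply (is_lim_Cseq_le _ _ _ _ O (HC j)). intros n _.
    replace (a n j - 0)%C with (a n j) by ring. apply HA. }
  assert (Hb := is_lim_Cseq_subseq _ _ h Hh (is_Cseries_geom K b HBb)).
  intros e he.
  destruct (geom_eventually_lt (K / (1 - r)) r (e / 4) hr ltac:(lra)) as [J HJ].
  specialize (HJ J (le_n J)).
  assert (Htail : forall f : nat -> C, (forall i, Cmod (f i) <= K * r ^ i) ->
                  forall n, Cmod (psum (fun i => f (J + i)%nat) n) < e / 4).
  { intros f Hf n. eapply Rle_lt_trans.
    - apply (psum_Cmod_geom (K * r ^ J) (fun i => f (J + i)%nat) n). intro i.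
      eapply Rle_trans; [apply Hf |]. rewrite pow_add. right. ring.
    - replace (K * r ^ J / (1 - r)) with (K / (1 - r) * r ^ J) by (field; lra). exact HJ. }
  destruct (is_lim_Cseq_psum a b J HC (e / 4)) as [N1 H1]; [lra |].
  destruct (Hb (e / 4)) as [N2 H2]; [lra |]. destruct (Hh J) as [N3 H3].
  exists (N1 + N2 + N3)%nat. intros N hN.
  specialize (H1 N ltac:(lia)). specialize (H2 N ltac:(lia)). specialize (H3 N ltac:(lia)).
  assert (HhN : h N = (J + (h N - J))%nat) by lia.
  set (m := (h N - J)%nat) in HhN. rewrite HhN in H2 |- *. rewrite psum_split in H2 |- *.
  pose proof (Htail (a N) (HA N) m) as Ta. pose proof (Htail b HBb m) as Tb.
  set (ta := psum (fun i => a N (J + i)%nat) m) in *.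
  set (tb := psum (fun i => b (J + i)%nat) m) in *.
  replace (psum (a N) J + ta - series b)%C
    with ((psum (a N) J - psum b J) + ta - tb + (psum b J + tb - series b))%C by ring.
  pose proof (Cmod_triangle (psum (a N) J - psum b J + ta - tb) (psum b J + tb - series b)).
  pose proof (Cmod_triangle (psum (a N) J - psum b J + ta) (- tb)) as T2.
  pose proof (Cmod_triangle (psum (a N) J - psum b J) ta). rewrite Cmod_opp in T2.
  unfold Cminus in *. lra.
Qed.

End GeometricBounds.

(** * q-Pochhammer symbols *)

Fixpoint poch (a p : C) (n : nat) : C :=
  match n with O => RtoC 1 | S k => (poch a p k * (1 - a * p ^ k))%C end.

Definition poch_inf (a p : C) : C := Clim (poch a p).

Lemma qpoch_poch : qpoch = poch.
Proof. reflexivity. Qed.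

Lemma qpoch_inf_poch_inf : qpoch_inf = poch_inf.
Proof. reflexivity. Qed.

Lemma poch_S (a p : C) (n : nat) : poch a p (S n) = (poch a p n * (1 - a * p ^ n))%C.
Proof. reflexivity. Qed.

Lemma poch_shift (a p : C) (n : nat) : poch a p (S n) = ((1 - a) * poch (a * p) p n)%C.
Proof. induction n; [simpl; ring |]. rewrite poch_S, IHn, poch_S, Cpow_S. ring. Qed.

Lemma poch_add (a p : C) (m n : nat) : poch a p (m + n) = (poch a p m * poch (a * p ^ m) p n)%C.
Proof.
  induction n; [rewrite Nat.add_0_r; simpl; ring |].
  rewrite Nat.add_succ_r, !poch_S, IHn, Cpow_add_r. ring.
Qed.

Lemma poch_double (a p : C) (n : nat) :
  poch a p (n + n) = (poch a (p * p) n * poch (a * p) (p * p) n)%C.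
Proof.
  induction n; [simpl; ring |].
  replace (S n + S n)%nat with (S (S (n + n))) by lia.
  rewrite !poch_S, IHn, Cpow_mult_l, Cpow_S, Cpow_add_r. ring.
Qed.

Lemma poch_mul_opp (a p : C) (n : nat) :
  (poch a p n * poch (- a) p n)%C = poch (a * a) (p * p) n.
Proof. induction n; simpl; [ring |]. rewrite <- IHn, Cpow_mult_l. ring. Qed.

Section PochhammerBounds.

Variables (a p : C).
Hypothesis hp : Cmod p < 1.

Let Ea := exp (Cmod a / (1 - Cmod p)).

Lemma poch_Cmod_le (n : nat) : Cmod (poch a p n) <= Ea.
Proof.
  unfold Ea. pose proof (Cmod_ge_0 p) as hr. set (r := Cmod p) in *.
  assert (H : forall n, Cmod (poch a p n) <= exp (Cmod a * (1 - r ^ n) / (1 - r))).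
  { induction n0.
    - simpl. rewrite Cmod_1. replace (Cmod a * (1 - 1) / (1 - r)) with 0 by (field; lra).
      rewrite exp_0. lra.
    - rewrite poch_S, Cmod_mult.
      assert (Hf : Cmod (1 - a * p ^ n0)%C <= exp (Cmod a * r ^ n0)).
      { eapply Rle_trans; [apply Cmod_triangle |]. rewrite Cmod_opp, Cmod_1, Cmod_mult, Cmod_pow.
        apply exp_ineq1_le. }
      eapply Rle_trans.
      { apply Rmult_le_compat; [apply Cmod_ge_0 | apply Cmod_ge_0 | apply IHn0 | apply Hf]. }
      rewrite <- exp_plus. right. f_equal. simpl. field. lra. }
  eapply Rle_trans; [apply H |]. apply exp_le_exp.
  unfold Rdiv. apply Rmult_le_compat_r; [left; apply Rinv_0_lt_compat; lra |].
  pose proof (Cmod_ge_0 a). pose proof (pow_le r n hr). nra.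
Qed.

Lemma poch_step_Cmod_le (n : nat) :
  Cmod (poch a p (S n) - poch a p n)%C <= Ea * Cmod a * Cmod p ^ n.
Proof.
  rewrite poch_S. replace (poch a p n * (1 - a * p ^ n) - poch a p n)%C
    with (- (poch a p n * a * p ^ n))%C by ring.
  rewrite Cmod_opp, !Cmod_mult, Cmod_pow.
  apply Rmult_le_compat_r; [apply pow_le, Cmod_ge_0 |].
  apply Rmult_le_compat_r; [apply Cmod_ge_0 | apply poch_Cmod_le].
Qed.

Lemma is_lim_poch : is_lim_Cseq (poch a p) (poch_inf a p).
Proof.
  destruct (is_lim_Cseq_geom_diff (Cmod p) (conj (Cmod_ge_0 p) hp) (Ea * Cmod a) (poch a p)) as [l Hl].
  { apply poch_step_Cmod_le. }
  unfold poch_inf. now rewrite (Clim_correct _ _ Hl).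
Qed.

Lemma poch_sub_1_Cmod_le (n : nat) : Cmod (poch a p n - 1)%C <= Ea * Cmod a / (1 - Cmod p).
Proof.
  change (RtoC 1) with (poch a p O). rewrite <- psum_telescope.
  apply (psum_Cmod_geom (Cmod p) (conj (Cmod_ge_0 p) hp)). apply poch_step_Cmod_le.
Qed.

Lemma poch_inf_sub_1_Cmod_le : Cmod (poch_inf a p - 1)%C <= Ea * Cmod a / (1 - Cmod p).
Proof.
  apply (is_lim_Cseq_le _ _ _ _ O is_lim_poch). intros n _. apply poch_sub_1_Cmod_le.
Qed.

End PochhammerBounds.

Lemma poch_inf_shift (a p : C) : Cmod p < 1 -> poch_inf a p = ((1 - a) * poch_inf (a * p) p)%C.
Proof.
  intro hp. apply (is_lim_Cseq_unique (fun n => poch a p (S n))).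
  - now apply is_lim_Cseq_incr_1, is_lim_poch.
  - apply (is_lim_Cseq_ext (fun n => (1 - a) * poch (a * p) p n)%C).
    + intro n. now rewrite poch_shift.
    + now apply is_lim_Cseq_scal, is_lim_poch.
Qed.

Lemma poch_Cmod_ge_pow (a p : C) (n : nat) : Cmod p <= 1 -> Cmod a <= 1 ->
  Cmod (poch a p n) >= (1 - Cmod a) ^ n.
Proof.
  intros hp ha. pose proof (Cmod_ge_0 p). pose proof (Cmod_ge_0 a).
  induction n; [simpl; rewrite Cmod_1; lra |].
  rewrite poch_S, Cmod_mult. simpl pow.
  assert (Hf : Cmod (1 - a * p ^ n)%C >= 1 - Cmod a).
  { pose proof (Cmod_sub_ge 1 (a * p ^ n)). rewrite Cmod_1, Cmod_mult, Cmod_pow in H1.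
    pose proof (pow_le_1 (Cmod p) n ltac:(lra)). pose proof (pow_le (Cmod p) n H). nra. }
  pose proof (pow_le (1 - Cmod a) n ltac:(lra)).
  rewrite Rmult_comm. apply Rle_ge, Rmult_le_compat; lra.
Qed.

Lemma poch_tail_near_1 (a p : C) : Cmod p < 1 -> Cmod a <= 1 ->
  exists I, forall m, Cmod (poch (a * p ^ I) p m - 1)%C <= 1 / 2.
Proof.
  intros hp ha. pose proof (Cmod_ge_0 p) as hr.
  set (E := exp (1 / (1 - Cmod p))).
  destruct (geom_eventually_lt (E / (1 - Cmod p)) (Cmod p) (1 / 2) ltac:(lra) ltac:(lra)) as [I HI].
  specialize (HI I (le_n I)). exists I. intro m.
  assert (hb : Cmod (a * p ^ I)%C <= Cmod p ^ I).
  { rewrite Cmod_mult, Cmod_pow. pose proof (pow_le (Cmod p) I hr). pose proof (Cmod_ge_0 a). nra. }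
  assert (hE : exp (Cmod (a * p ^ I)%C / (1 - Cmod p)) <= E).
  { pose proof (pow_le_1 (Cmod p) I ltac:(lra)). apply exp_le_exp.
    unfold Rdiv. apply Rmult_le_compat_r; [left; apply Rinv_0_lt_compat |]; lra. }
  eapply Rle_trans; [apply poch_sub_1_Cmod_le; exact hp |].
  apply Rle_trans with (E * Cmod p ^ I / (1 - Cmod p)).
  - unfold Rdiv. apply Rmult_le_compat_r; [left; apply Rinv_0_lt_compat; lra |].
    apply Rmult_le_compat; [apply Rlt_le, exp_pos | apply Cmod_ge_0 | exact hE | exact hb].
  - replace (E * Cmod p ^ I / (1 - Cmod p)) with (E / (1 - Cmod p) * Cmod p ^ I) by (field; lra).
    lra.
Qed.

Lemma poch_Cmod_ge_uniform (a p : C) : Cmod p < 1 -> Cmod a < 1 ->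
  exists c, c > 0 /\ forall n, Cmod (poch a p n) >= c.
Proof.
  intros hp ha. pose proof (Cmod_ge_0 p). pose proof (Cmod_ge_0 a).
  destruct (poch_tail_near_1 a p hp ltac:(lra)) as [I HI].
  assert (hI : 0 < (1 - Cmod a) ^ I) by (apply pow_lt; lra).
  exists ((1 - Cmod a) ^ I / 2). split; [lra |]. intro n.
  destruct (Nat.lt_ge_cases n I) as [hn | hn].
  - pose proof (poch_Cmod_ge_pow a p n ltac:(lra) ltac:(lra)).
    pose proof (pow_le_pow_le_1 (1 - Cmod a) I n ltac:(lra) ltac:(lia)). lra.
  - replace n with (I + (n - I))%nat by lia. rewrite poch_add, Cmod_mult.
    pose proof (poch_Cmod_ge_pow a p I ltac:(lra) ltac:(lra)).
    pose proof (Cmod_sub_ge 1 (poch (a * p ^ I) p (n - I))) as Hge.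
    rewrite Cmod_1, Cmod_sub_sym in Hge. specialize (HI (n - I)%nat).
    apply Rle_ge, Rle_trans with ((1 - Cmod a) ^ I * (1 / 2)); [lra |].
    apply Rmult_le_compat; lra.
Qed.

Lemma poch_neq_0 (a p : C) (n : nat) : Cmod p < 1 -> Cmod a < 1 -> poch a p n <> RtoC 0.
Proof.
  intros hp ha h. destruct (poch_Cmod_ge_uniform a p hp ha) as [c [hc H]].
  specialize (H n). rewrite h, Cmod_0 in H. lra.
Qed.

Lemma poch_inf_neq_0 (a p : C) : Cmod p < 1 -> Cmod a < 1 -> poch_inf a p <> RtoC 0.
Proof.
  intros hp ha h. destruct (poch_Cmod_ge_uniform a p hp ha) as [c [hc H]].
  pose proof (is_lim_Cseq_Cmod_ge _ _ _ (is_lim_poch a p hp) H). rewrite h, Cmod_0 in H0. lra.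
Qed.

(** * Gaussian binomial coefficients *)

Fixpoint tri (n : nat) : nat := match n with O => O | S k => (tri k + k)%nat end.

Definition qbinom (p : C) (n k : nat) : C :=
  if (k <=? n)%nat then (poch p p n / (poch p p k * poch p p (n - k)))%C else RtoC 0.

Section GaussianBinomial.

Variable p : C.
Hypothesis hp : Cmod p < 1.

Let poch_pp_neq_0 (n : nat) : poch p p n <> RtoC 0 := poch_neq_0 p p n hp hp.

Lemma qbinom_0_r (n : nat) : qbinom p n 0 = RtoC 1.
Proof. unfold qbinom. simpl. rewrite Nat.sub_0_r. field; repeat split; apply poch_pp_neq_0. Qed.

Lemma qbinom_diag (n : nat) : qbinom p n n = RtoC 1.
Proof.
  unfold qbinom. rewrite Nat.leb_refl, Nat.sub_diag. simpl. field; repeat split; apply poch_pp_neq_0.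
Qed.

Lemma qbinom_gt (n k : nat) : (n < k)%nat -> qbinom p n k = RtoC 0.
Proof. intro h. unfold qbinom. now destruct (Nat.leb_spec k n); [lia |]. Qed.

Lemma qbinom_sym (n k : nat) : (k <= n)%nat -> qbinom p n (n - k) = qbinom p n k.
Proof.
  intro h. unfold qbinom.
  destruct (Nat.leb_spec (n - k) n); [| lia]. destruct (Nat.leb_spec k n); [| lia].
  replace (n - (n - k))%nat with k by lia. f_equal. ring.
Qed.

Lemma qbinom_pascal (n k : nat) : (k <= n)%nat ->
  qbinom p (S n) (S k) = (qbinom p n k + p ^ S k * qbinom p n (S k))%C.
Proof.
  intro hk. destruct (Nat.eq_dec k n) as [-> | ne].
  { rewrite !qbinom_diag, qbinom_gt by lia. ring. }
  unfold qbinom.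
  destruct (Nat.leb_spec (S k) (S n)); [| lia]. destruct (Nat.leb_spec k n); [| lia].
  destruct (Nat.leb_spec (S k) n); [| lia].
  set (d := (n - S k)%nat).
  replace (S n - S k)%nat with (S d) by (unfold d; lia).
  replace (n - k)%nat with (S d) by (unfold d; lia).
  replace n with (k + S d)%nat by (unfold d; lia).
  pose proof (poch_pp_neq_0 (S k)) as hk1. pose proof (poch_pp_neq_0 (S d)) as hd1.
  rewrite !poch_S in *. rewrite Cpow_add_r, !Cpow_S.
  pose proof (poch_pp_neq_0 k). pose proof (poch_pp_neq_0 d).
  pose proof (poch_pp_neq_0 (k + S d)).
  assert ((1 - p * p ^ k)%C <> RtoC 0) by (intro h; apply hk1; rewrite h; ring).
  assert ((1 - p * p ^ d)%C <> RtoC 0) by (intro h; apply hd1; rewrite h; ring).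
  field. repeat split; auto.
Qed.

Lemma rothe (n : nat) (x : C) :
  poch (- x) p n = psum (fun k => qbinom p n k * p ^ tri k * x ^ k)%C (S n).
Proof.
  induction n in x |- *.
  { simpl. rewrite qbinom_0_r. simpl. ring. }
  rewrite poch_shift. replace (- x * p)%C with (- (x * p))%C by ring. rewrite (IHn (x * p)%C).
  set (A := fun k => (qbinom p n k * p ^ tri k * (x * p) ^ k)%C).
  assert (E1 : psum A (S n) = (1 + psum (fun k => A (S k)) n)%C).
  { rewrite psum_first. unfold A at 1. rewrite qbinom_0_r. simpl. ring. }
  assert (E2 : psum (fun k => A (S k)) (S n) = psum (fun k => A (S k)) n).
  { rewrite psum_S. unfold A at 2. rewrite qbinom_gt by lia. ring. }
  rewrite (psum_first (fun k => qbinom p (S n) k * p ^ tri k * x ^ k)%C (S n)), qbinom_0_r.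
  rewrite (psum_ext (fun i => qbinom p (S n) (S i) * p ^ tri (S i) * x ^ S i)%C
                    (fun k => x * A k + A (S k))%C).
  - rewrite psum_plus, psum_scal, E2, E1. simpl. ring.
  - intros i hi. rewrite qbinom_pascal by lia. unfold A. simpl tri.
    rewrite !Cpow_add_r, !Cpow_mult_l, !Cpow_S. ring.
Qed.

End GaussianBinomial.

(** * Gauss's identities for [psi] and [phi] *)

Lemma tri_add (a b : nat) : tri (a + b) = (tri a + tri b + a * b)%nat.
Proof.
  induction b; [rewrite Nat.add_0_r, Nat.mul_0_r; simpl; lia |].
  rewrite Nat.add_succ_r. simpl. rewrite IHb. nia.
Qed.

Lemma tri_spec (k : nat) : (2 * tri k + k = k * k)%nat.
Proof. induction k; [reflexivity |]. simpl tri. nia. Qed.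

Lemma tri_S_ge (k : nat) : (k <= tri (S k))%nat.
Proof. induction k; simpl in *; lia. Qed.

Lemma Cpow_cancel (q : C) (A B C0 D0 : nat) : q <> RtoC 0 -> (A + C0 = B + D0)%nat ->
  (q ^ A * / q ^ B * q ^ C0 = q ^ D0)%C.
Proof.
  intros hq h. assert (hB : (q ^ B)%C <> RtoC 0) by now apply Cpow_nz.
  apply (Cmult_reg_l (q ^ B)); [exact hB |].
  rewrite <- Cpow_add_r, <- h, Cpow_add_r. field. exact hB.
Qed.

Lemma Cpow_m1_sub (N j : nat) : (j <= N)%nat -> ((- 1) ^ (N - j) = (- 1) ^ N * (- 1) ^ j)%C.
Proof.
  intro h. replace N with ((N - j) + j)%nat at 2 by lia.
  rewrite Cpow_add_r, <- Cmult_assoc, <- Cpow_add_r.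
  replace (j + j)%nat with (2 * j)%nat by lia.
  rewrite Cpow_mult_r. replace ((- 1) ^ 2)%C with (RtoC 1) by (simpl; ring).
  rewrite Cpow_1_l. ring.
Qed.

(* Each factor [1 - a p^(j-N)] equals [-a p^(j-N) (1 - p^(N-j) / a)]. *)
Lemma poch_reverse (p a : C) (N : nat) : p <> RtoC 0 -> a <> RtoC 0 ->
  (poch (a / p ^ N) p N * p ^ tri (S N) = (- a) ^ N * poch (p / a) p N)%C.
Proof.
  intros hp ha. induction N; [simpl; ring |].
  assert (hpN : (p ^ N)%C <> RtoC 0) by now apply Cpow_nz.
  rewrite poch_shift. replace (a / p ^ S N * p)%C with (a / p ^ N)%C by (rewrite Cpow_S; field; auto).
  change (tri (S (S N))) with (tri (S N) + S N)%nat. rewrite Cpow_add_r.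
  replace ((1 - a / p ^ S N) * poch (a / p ^ N) p N * (p ^ tri (S N) * p ^ S N))%C
    with ((p ^ S N - a) * (poch (a / p ^ N) p N * p ^ tri (S N)))%C
    by (rewrite Cpow_S; field; auto).
  rewrite IHN, poch_S, !Cpow_S. field. auto.
Qed.

Lemma psi_finite_poch (q : C) (N : nat) : q <> RtoC 0 ->
  (poch (- / q ^ N) q (N + S N) * q ^ tri (S N) = 2 * (poch (- q) q N * poch (- q) q N))%C.
Proof.
  intro hq. assert (hqN : (q ^ N)%C <> RtoC 0) by now apply Cpow_nz.
  rewrite poch_add. replace (- / q ^ N * q ^ N)%C with (RtoC (-1)) by (field; auto).
  rewrite poch_shift. replace (- / q ^ N)%C with (-1 / q ^ N)%C by (field; auto).
  transitivity ((poch (-1 / q ^ N) q N * q ^ tri (S N)) * ((1 - -1) * poch (-1 * q) q N))%C; [ring |].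
  rewrite poch_reverse by (auto; intro h; injection h; lra).
  replace (- -1)%C with (RtoC 1) by ring. rewrite Cpow_1_l.
  replace (q / -1)%C with (- q)%C by field. replace (-1 * q)%C with (- q)%C by ring. ring.
Qed.

(* The terms [k = N - i] and [k = N + 1 + i] of the expansion coincide. *)
Lemma psi_finite_sum (q : C) (N : nat) : q <> RtoC 0 ->
  (psum (fun k => qbinom q (N + S N) k * q ^ tri k * (/ q ^ N) ^ k)%C (S (N + S N)) * q ^ tri (S N) =
   2 * psum (fun j => qbinom q (N + S N) (S N + j) * q ^ tri (S j))%C (S N))%C.
Proof.
  intro hq. assert (hqN : (q ^ N)%C <> RtoC 0) by now apply Cpow_nz.
  set (T := (q ^ tri (S N))%C).
  set (B := fun j => (qbinom q (N + S N) (S N + j) * q ^ tri (S j))%C).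
  assert (Hupper : forall j, (T * (qbinom q (N + S N) (S N + j) * q ^ tri (S N + j) *
                               (/ q ^ N) ^ (S N + j)) = B j)%C).
  { intro j. rewrite Cpow_inv, <- Cpow_mult_r by auto. unfold T, B.
    rewrite <- (Cpow_cancel q (tri (S N + j)) (N * (S N + j)) (tri (S N)) (tri (S j))).
    - ring.
    - exact hq.
    - rewrite tri_add. pose proof (tri_spec (S N)). simpl tri in *. nia. }
  assert (Hlower : forall i, (i < S N)%nat ->
            (T * (qbinom q (N + S N) (S N - 1 - i) * q ^ tri (S N - 1 - i) *
                  (/ q ^ N) ^ (S N - 1 - i)) = B i)%C).
  { intros i hi. replace (S N - 1 - i)%nat with (N - i)%nat by lia.
    replace (qbinom q (N + S N) (N - i)) with (qbinom q (N + S N) (S N + i))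
      by (rewrite <- qbinom_sym by lia; f_equal; lia).
    rewrite Cpow_inv, <- Cpow_mult_r by auto. unfold T, B.
    rewrite <- (Cpow_cancel q (tri (N - i)) (N * (N - i)) (tri (S N)) (tri (S i))).
    - ring.
    - exact hq.
    - replace N with (N - i + i)%nat at 2 3 4 by lia.
      replace (S (N - i + i)) with (N - i + S i)%nat by lia.
      rewrite tri_add. pose proof (tri_spec (N - i)). simpl tri. nia. }
  replace (S (N + S N)) with (S N + S N)%nat by lia.
  rewrite psum_split, (psum_rev _ (S N)), Cmult_plus_distr_r, !(Cmult_comm _ T), <- !psum_scal.
  rewrite (psum_ext _ B _ Hlower), (psum_ext _ B _ (fun j _ => Hupper j)), psum_scal. ring.
Qed.

Lemma psi_finite (q : C) (N : nat) : q <> RtoC 0 -> Cmod q < 1 ->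
  psum (fun j => qbinom q (N + S N) (S N + j) * q ^ tri (S j))%C (S N) =
  (poch (- q) q N * poch (- q) q N)%C.
Proof.
  intros hq hq1. apply (Cmult_reg_l 2); [intro h; injection h; lra |].
  rewrite <- psi_finite_poch, <- psi_finite_sum by exact hq. f_equal. now rewrite rothe.
Qed.

Lemma phi_finite_term (q : C) (N k j : nat) : q <> RtoC 0 ->
  (4 * tri k + 2 * k + 4 * tri (S N) = 4 * N * k + (2 * (j * j) + 2 * N))%nat ->
  ((q ^ 4) ^ tri k * (- (q ^ 2 * / (q ^ 4) ^ N)) ^ k * q ^ (4 * tri (S N)) =
   (- 1) ^ k * q ^ (2 * (j * j)) * q ^ (2 * N))%C.
Proof.
  intros hq h.
  replace (- (q ^ 2 * / (q ^ 4) ^ N))%C with ((- 1) * (q ^ 2 * / (q ^ 4) ^ N))%C by ring.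
  rewrite !Cpow_mult_l, Cpow_inv by (now apply Cpow_nz, Cpow_nz). rewrite <- !Cpow_mult_r.
  pose proof (Cpow_cancel q (4 * tri k + 2 * k) (4 * (N * k)) (4 * tri (S N))
                (2 * (j * j) + 2 * N) hq ltac:(lia)) as P.
  rewrite !Cpow_add_r in P.
  transitivity ((- 1) ^ k *
                (q ^ (4 * tri k) * q ^ (2 * k) * / q ^ (4 * (N * k)) * q ^ (4 * tri (S N))))%C;
    [ring | rewrite P; ring].
Qed.

Lemma phi_finite_poch (q : C) (N : nat) : q <> RtoC 0 ->
  (poch (q ^ 2 * / (q ^ 4) ^ N) (q ^ 4) (N + N) * q ^ (4 * tri (S N)) =
   (- 1) ^ N * q ^ (2 * N) * (poch (q ^ 2) (q ^ 4) N * poch (q ^ 2) (q ^ 4) N))%C.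
Proof.
  intro hq.
  assert (hpN : ((q ^ 4) ^ N)%C <> RtoC 0) by now apply Cpow_nz, Cpow_nz.
  assert (hq2 : (q ^ 2)%C <> RtoC 0) by now apply Cpow_nz.
  rewrite poch_add. replace (q ^ 2 * / (q ^ 4) ^ N * (q ^ 4) ^ N)%C with (q ^ 2)%C by (field; auto).
  transitivity ((poch (q ^ 2 / (q ^ 4) ^ N) (q ^ 4) N * (q ^ 4) ^ tri (S N)) *
                poch (q ^ 2) (q ^ 4) N)%C.
  { rewrite Cpow_mult_r. change (q ^ 2 * / (q ^ 4) ^ N)%C with (q ^ 2 / (q ^ 4) ^ N)%C. ring. }
  rewrite poch_reverse by (apply Cpow_nz; auto).
  replace (q ^ 4 / q ^ 2)%C with (q ^ 2)%C by (simpl; field; auto).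
  replace (- q ^ 2)%C with ((- 1) * q ^ 2)%C by ring.
  rewrite Cpow_mult_l, <- Cpow_mult_r. ring.
Qed.

(* The terms [k = N - j] and [k = N + j] of the expansion coincide, the middle one occurs once. *)
Lemma phi_finite_sum (q : C) (N : nat) : q <> RtoC 0 ->
  (psum (fun k => qbinom (q ^ 4) (N + N) k * (q ^ 4) ^ tri k * (- (q ^ 2 * / (q ^ 4) ^ N)) ^ k)%C
        (S (N + N)) * q ^ (4 * tri (S N)) =
   (- 1) ^ N * q ^ (2 * N) *
   (2 * psum (fun j => (- 1) ^ j * qbinom (q ^ 4) (N + N) (N + j) * q ^ (2 * (j * j))) (S N)
    - qbinom (q ^ 4) (N + N) N))%C.
Proof.
  intro hq.
  set (x := (q ^ 2 * / (q ^ 4) ^ N)%C).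
  set (T := (q ^ (4 * tri (S N)))%C).
  set (S0 := ((- 1) ^ N * q ^ (2 * N))%C).
  set (B := fun j => ((- 1) ^ j * qbinom (q ^ 4) (N + N) (N + j) * q ^ (2 * (j * j)))%C).
  assert (Hupper : forall i, (T * (qbinom (q ^ 4) (N + N) (N + i) * (q ^ 4) ^ tri (N + i) *
                               (- x) ^ (N + i)) = S0 * B i)%C).
  { intro i.
    transitivity (qbinom (q ^ 4) (N + N) (N + i) * ((q ^ 4) ^ tri (N + i) * (- x) ^ (N + i) * T))%C;
      [ring |].
    unfold T, x. rewrite (phi_finite_term q N (N + i) i)
      by (auto; pose proof (tri_spec (N + i)); pose proof (tri_spec (S N)); nia).
    rewrite Cpow_add_r. unfold B, S0. ring. }
  assert (Hlower : forall i, (i < N)%nat ->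
            (T * (qbinom (q ^ 4) (N + N) (N - 1 - i) * (q ^ 4) ^ tri (N - 1 - i) *
                  (- x) ^ (N - 1 - i)) = S0 * B (S i))%C).
  { intros i hi. replace (N - 1 - i)%nat with (N - S i)%nat by lia.
    replace (qbinom (q ^ 4) (N + N) (N - S i)) with (qbinom (q ^ 4) (N + N) (N + S i))
      by (rewrite <- qbinom_sym by lia; f_equal; lia).
    transitivity (qbinom (q ^ 4) (N + N) (N + S i) *
                  ((q ^ 4) ^ tri (N - S i) * (- x) ^ (N - S i) * T))%C; [ring |].
    unfold T, x. rewrite (phi_finite_term q N (N - S i) (S i)).
    - rewrite Cpow_m1_sub by lia. unfold B, S0. ring.
    - exact hq.
    - replace N with (N - S i + S i)%nat at 2 3 5 by lia.
      pose proof (tri_spec (N - S i)). pose proof (tri_spec (S (N - S i + S i))). nia. }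
  replace (S (N + N)) with (N + S N)%nat by lia.
  rewrite psum_split, (psum_rev _ N), Cmult_plus_distr_r, !(Cmult_comm _ T), <- !psum_scal.
  rewrite (psum_ext _ (fun i => S0 * B (S i))%C _ Hlower).
  rewrite (psum_ext _ (fun i => S0 * B i)%C _ (fun i _ => Hupper i)).
  rewrite !psum_scal, (psum_first B N).
  replace (B O) with (qbinom (q ^ 4) (N + N) N) by (unfold B; rewrite Nat.add_0_r; simpl; ring).
  ring.
Qed.

Lemma phi_finite (q : C) (N : nat) : q <> RtoC 0 -> Cmod q < 1 ->
  (2 * psum (fun j => (- 1) ^ j * qbinom (q ^ 4) (N + N) (N + j) * q ^ (2 * (j * j))) (S N)
     - qbinom (q ^ 4) (N + N) N)%C = (poch (q ^ 2) (q ^ 4) N * poch (q ^ 2) (q ^ 4) N)%C.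
Proof.
  intros hq hq1. apply (Cmult_reg_l ((- 1) ^ N * q ^ (2 * N))%C).
  { apply Cmult_neq_0; apply Cpow_nz; auto. intro h. injection h. lra. }
  rewrite <- phi_finite_poch, <- phi_finite_sum by exact hq. f_equal.
  pose proof (rothe (q ^ 4) (Cmod_pow_S_lt_1 q 3 hq1) (N + N) (- (q ^ 2 * / (q ^ 4) ^ N))) as R.
  replace (- - (q ^ 2 * / (q ^ 4) ^ N))%C with (q ^ 2 * / (q ^ 4) ^ N)%C in R by ring.
  now symmetry.
Qed.

Lemma qbinom_bounded (p : C) : Cmod p < 1 -> exists B, forall n k, Cmod (qbinom p n k) <= B.
Proof.
  intro hp. destruct (poch_Cmod_ge_uniform p p hp hp) as [c [hc Hc]].
  set (M := exp (Cmod p / (1 - Cmod p))). assert (HM : 0 < M) by apply exp_pos.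
  exists (M / (c * c)). intros n k. unfold qbinom. destruct (Nat.leb_spec k n).
  - rewrite Cmod_div by (apply Cmult_neq_0; apply poch_neq_0; auto). rewrite Cmod_mult.
    pose proof (Hc k). pose proof (Hc (n - k)%nat). pose proof (poch_Cmod_le p p hp n).
    pose proof (Cmod_ge_0 (poch p p n)).
    unfold Rdiv. apply Rmult_le_compat; auto.
    + left. apply Rinv_0_lt_compat. nra.
    + apply Rinv_le_contravar; [nra |]. apply Rmult_le_compat; lra.
  - rewrite Cmod_0. left. apply Rdiv_lt_0_compat; nra.
Qed.

Lemma is_lim_qbinom (p : C) (n k : nat -> nat) (M : nat) : Cmod p < 1 ->
  (forall N, (N >= M)%nat -> (k N <= n N)%nat) ->
  tends_to_infty k -> tends_to_infty (fun N => n N - k N)%nat ->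
  is_lim_Cseq (fun N => qbinom p (n N) (k N)) (/ poch_inf p p)%C.
Proof.
  intros hp hkn hk hnk.
  assert (hn : tends_to_infty n).
  { intro m. destruct (hk m) as [N0 H0]. exists (N0 + M)%nat. intros N hN.
    specialize (H0 N ltac:(lia)). specialize (hkn N ltac:(lia)). lia. }
  pose proof (poch_inf_neq_0 p p hp hp) as hQ.
  apply (is_lim_Cseq_ext_loc
           (fun N => poch p p (n N) / (poch p p (k N) * poch p p (n N - k N)%nat))%C _ _ M).
  { intros N hN. unfold qbinom. destruct (Nat.leb_spec (k N) (n N)); [reflexivity |].
    specialize (hkn N hN). lia. }
  replace (/ poch_inf p p)%C with (poch_inf p p / (poch_inf p p * poch_inf p p))%C by (field; auto).
  apply is_lim_Cseq_div; [| apply is_lim_Cseq_mult | now apply Cmult_neq_0];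
    apply (is_lim_Cseq_subseq (poch p p)); auto; now apply is_lim_poch.
Qed.

Definition psi (q : C) : C := series (fun j => q ^ tri (S j))%C.

(* [2 * half_phi q - 1] is Ramanujan's [phi(-q^2)], the sum of [(-1)^j q^(2j^2)] over all
   integers [j]. *)
Definition half_phi (q : C) : C := series (fun j => (- 1) ^ j * q ^ (2 * (j * j)))%C.

Lemma Cmod_psi_term_le (q : C) (j : nat) : Cmod q < 1 -> Cmod (q ^ tri (S j))%C <= 1 * Cmod q ^ j.
Proof.
  intro hq. rewrite Cmod_pow, Rmult_1_l. pose proof (Cmod_ge_0 q).
  apply pow_le_pow_le_1; [lra | apply tri_S_ge].
Qed.

Lemma Cmod_half_phi_term_le (q : C) (j : nat) : Cmod q < 1 ->
  Cmod ((- 1) ^ j * q ^ (2 * (j * j)))%C <= 1 * Cmod q ^ j.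
Proof.
  intro hq. rewrite Cmod_mult, Cmod_m1_pow, Cmod_pow, !Rmult_1_l. pose proof (Cmod_ge_0 q).
  apply pow_le_pow_le_1; [lra | nia].
Qed.

Lemma is_Cseries_psi (q : C) : Cmod q < 1 -> is_Cseries (fun j => q ^ tri (S j))%C (psi q).
Proof.
  intro hq. apply (is_Cseries_geom (Cmod q) (conj (Cmod_ge_0 q) hq) 1).
  intro; now apply Cmod_psi_term_le.
Qed.

Lemma psi_poch_inf (q : C) : q <> RtoC 0 -> Cmod q < 1 ->
  (/ poch_inf q q * psi q)%C = (poch_inf (- q) q * poch_inf (- q) q)%C.
Proof.
  intros hq0 hq. pose proof (Cmod_ge_0 q).
  destruct (qbinom_bounded q hq) as [B HB].
  assert (Hb : series (fun j => / poch_inf q q * q ^ tri (S j))%C = (/ poch_inf q q * psi q)%C).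
  { apply series_correct.
    apply (is_lim_Cseq_ext (fun N => / poch_inf q q * psum (fun j => q ^ tri (S j)) N)%C).
    - intro N. now rewrite psum_scal.
    - now apply is_lim_Cseq_scal, is_Cseries_psi. }
  apply (is_lim_Cseq_unique
           (fun N => psum (fun j => qbinom q (N + S N) (S N + j) * q ^ tri (S j))%C (S N))).
  - rewrite <- Hb. apply (tannery (Cmod q) (conj H hq) B).
    + apply tends_to_infty_ge. intro; lia.
    + intros N j. rewrite Cmod_mult, <- (Rmult_1_l (Cmod q ^ j)).
      apply Rmult_le_compat;
        [apply Cmod_ge_0 | apply Cmod_ge_0 | apply HB | now apply Cmod_psi_term_le].
    + intro j. apply is_lim_Cseq_mult; [| apply is_lim_Cseq_const].
      apply (is_lim_qbinom q (fun N => N + S N)%nat (fun N => S N + j)%nat j hq).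
      * intros; lia.
      * apply tends_to_infty_ge. intro; lia.
      * intro m. exists (m + j)%nat. intros N hN. lia.
  - apply (is_lim_Cseq_ext (fun N => poch (- q) q N * poch (- q) q N)%C).
    + intro N. now rewrite psi_finite.
    + apply is_lim_Cseq_mult; now apply is_lim_poch.
Qed.

Lemma is_Cseries_half_phi (q : C) : Cmod q < 1 ->
  is_Cseries (fun j => (- 1) ^ j * q ^ (2 * (j * j)))%C (half_phi q).
Proof.
  intro hq. apply (is_Cseries_geom (Cmod q) (conj (Cmod_ge_0 q) hq) 1).
  intro; now apply Cmod_half_phi_term_le.
Qed.

Lemma half_phi_poch_inf (q : C) : q <> RtoC 0 -> Cmod q < 1 ->
  (2 * (/ poch_inf (q ^ 4) (q ^ 4) * half_phi q) - / poch_inf (q ^ 4) (q ^ 4))%C =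
  (poch_inf (q ^ 2) (q ^ 4) * poch_inf (q ^ 2) (q ^ 4))%C.
Proof.
  intros hq0 hq. pose proof (Cmod_ge_0 q).
  assert (hq4 : Cmod (q ^ 4)%C < 1) by now apply Cmod_pow_S_lt_1.
  destruct (qbinom_bounded (q ^ 4)%C hq4) as [B HB].
  set (Q := poch_inf (q ^ 4) (q ^ 4)).
  assert (Hb : series (fun j => / Q * ((- 1) ^ j * q ^ (2 * (j * j))))%C = (/ Q * half_phi q)%C).
  { apply series_correct.
    apply (is_lim_Cseq_ext (fun N => / Q * psum (fun j => (- 1) ^ j * q ^ (2 * (j * j))) N)%C).
    - intro N. now rewrite psum_scal.
    - now apply is_lim_Cseq_scal, is_Cseries_half_phi. }
  apply (is_lim_Cseq_unique (fun N =>
           2 * psum (fun j => (- 1) ^ j * qbinom (q ^ 4) (N + N) (N + j) * q ^ (2 * (j * j)))%C (S N)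
           - qbinom (q ^ 4) (N + N) N)%C).
  - apply is_lim_Cseq_minus;
      [apply is_lim_Cseq_scal; rewrite <- Hb; apply (tannery (Cmod q) (conj H hq) B) |].
    + apply tends_to_infty_ge. intro; lia.
    + intros N j. rewrite !Cmod_mult, Cmod_m1_pow, Rmult_1_l, Cmod_pow.
      apply Rmult_le_compat; [apply Cmod_ge_0 | apply pow_le, Cmod_ge_0 | apply HB |].
      apply pow_le_pow_le_1; [lra | nia].
    + intro j.
      apply (is_lim_Cseq_ext
               (fun N => ((- 1) ^ j * q ^ (2 * (j * j))) * qbinom (q ^ 4) (N + N) (N + j))%C);
        [intro; ring |].
      replace (/ Q * ((- 1) ^ j * q ^ (2 * (j * j))))%C
        with (((- 1) ^ j * q ^ (2 * (j * j))) * / Q)%C by ring.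
      apply is_lim_Cseq_scal, (is_lim_qbinom (q ^ 4) (fun N => N + N)%nat (fun N => N + j)%nat j hq4).
      * intros; lia.
      * apply tends_to_infty_ge. intro; lia.
      * intro m. exists (m + j)%nat. intros N hN. lia.
    + apply (is_lim_qbinom (q ^ 4) (fun N => N + N)%nat (fun N => N) O hq4).
      * intros; lia.
      * apply tends_to_infty_ge. intro; lia.
      * apply tends_to_infty_ge. intro; lia.
  - apply (is_lim_Cseq_ext (fun N => poch (q ^ 2) (q ^ 4) N * poch (q ^ 2) (q ^ 4) N)%C).
    + intro N. now rewrite phi_finite.
    + apply is_lim_Cseq_mult; now apply is_lim_poch.
Qed.

Lemma poch_inf_parity (a p : C) : Cmod p < 1 ->
  poch_inf a p = (poch_inf a (p ^ 2) * poch_inf (a * p) (p ^ 2))%C.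
Proof.
  intro hp. assert (hp2 : Cmod (p ^ 2)%C < 1) by now apply Cmod_pow_S_lt_1.
  apply (is_lim_Cseq_unique (fun n => poch a p (n + n))).
  - apply (is_lim_Cseq_subseq (poch a p)); [| now apply is_lim_poch].
    apply tends_to_infty_ge. intro; lia.
  - apply (is_lim_Cseq_ext (fun n => poch a (p ^ 2) n * poch (a * p) (p ^ 2) n)%C).
    + intro n. rewrite poch_double. now replace (p * p)%C with (p ^ 2)%C by ring.
    + apply is_lim_Cseq_mult; now apply is_lim_poch.
Qed.

Lemma poch_inf_mul_opp (a p : C) : Cmod p < 1 ->
  (poch_inf a p * poch_inf (- a) p)%C = poch_inf (a ^ 2) (p ^ 2).
Proof.
  intro hp. assert (hp2 : Cmod (p ^ 2)%C < 1) by now apply Cmod_pow_S_lt_1.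
  apply (is_lim_Cseq_unique (fun n => poch a p n * poch (- a) p n)%C).
  - apply is_lim_Cseq_mult; now apply is_lim_poch.
  - apply (is_lim_Cseq_ext (poch (a ^ 2) (p ^ 2))); [| now apply is_lim_poch].
    intro n. rewrite poch_mul_opp. replace (a * a)%C with (a ^ 2)%C by ring.
    now replace (p * p)%C with (p ^ 2)%C by ring.
Qed.

Lemma euler_poch_inf (q : C) : Cmod q < 1 ->
  (poch_inf q (q ^ 2) * poch_inf (- q) q)%C = RtoC 1.
Proof.
  intro hq. assert (hq2 : Cmod (q ^ 2)%C < 1) by now apply Cmod_pow_S_lt_1.
  apply (Cmult_reg_l (poch_inf (q ^ 2) (q ^ 2))); [now apply poch_inf_neq_0 |].
  rewrite <- (poch_inf_mul_opp q q hq) at 2. rewrite (poch_inf_parity q q hq).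
  replace (q * q)%C with (q ^ 2)%C by ring. ring.
Qed.

Lemma psi_mul_poch_inf (q : C) : q <> RtoC 0 -> Cmod q < 1 ->
  (psi q * poch_inf q (q ^ 2))%C = poch_inf (q ^ 2) (q ^ 2).
Proof.
  intros hq0 hq.
  replace (psi q) with (poch_inf q q * (poch_inf (- q) q * poch_inf (- q) q))%C.
  2: { rewrite <- psi_poch_inf by auto. field. now apply poch_inf_neq_0. }
  rewrite <- (poch_inf_mul_opp q q hq).
  transitivity (poch_inf q q * poch_inf (- q) q * (poch_inf q (q ^ 2) * poch_inf (- q) q))%C; [ring |].
  rewrite euler_poch_inf by exact hq. ring.
Qed.

Lemma half_phi_mul_poch_inf (q : C) : q <> RtoC 0 -> Cmod q < 1 ->
  ((2 * half_phi q - 1) * poch_inf (- q ^ 2) (q ^ 2))%C = poch_inf (q ^ 2) (q ^ 2).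
Proof.
  intros hq0 hq. assert (hq2 : Cmod (q ^ 2)%C < 1) by now apply Cmod_pow_S_lt_1.
  assert (hq4 : (q ^ 4 = (q ^ 2) ^ 2)%C) by ring.
  replace (2 * half_phi q - 1)%C
    with (poch_inf (q ^ 4) (q ^ 4) * (poch_inf (q ^ 2) (q ^ 4) * poch_inf (q ^ 2) (q ^ 4)))%C.
  2: { rewrite <- half_phi_poch_inf by auto. field. apply poch_inf_neq_0; now apply Cmod_pow_S_lt_1. }
  rewrite (poch_inf_parity (q ^ 2) (q ^ 2) hq2), <- hq4.
  replace (q ^ 2 * q ^ 2)%C with (q ^ 4)%C by ring.
  transitivity (poch_inf (q ^ 4) (q ^ 4) * poch_inf (q ^ 2) (q ^ 4) *
                (poch_inf (q ^ 2) (q ^ 4) * poch_inf (- q ^ 2) (q ^ 2)))%C; [ring |].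
  rewrite hq4, euler_poch_inf by exact hq2. ring.
Qed.

(** * The right-hand side *)

Section DoubleSeries.

Variable q : C.
Hypothesis hq : Cmod q < 1.

Let hq0 : 0 <= Cmod q := Cmod_ge_0 q.

Lemma one_plus_q_neq_0 : (1 + q)%C <> RtoC 0.
Proof.
  intro h. pose proof (Cmod_sub_ge 1 (- q)) as H.
  replace (1 - - q)%C with (1 + q)%C in H by ring. rewrite h, Cmod_0, Cmod_1, Cmod_opp in H. lra.
Qed.

Definition ptheta (y : C) : C := series (fun m => (- 1) ^ m * q ^ (2 * (m * m)) * y ^ m)%C.

Lemma ptheta_term_Cmod_le (y : C) (m : nat) : Cmod y <= 1 ->
  Cmod ((- 1) ^ m * q ^ (2 * (m * m)) * y ^ m)%C <= 1 * Cmod q ^ m.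
Proof.
  intro hy. rewrite Cmod_mult, (Cmod_pow y).
  pose proof (pow_le (Cmod y) m (Cmod_ge_0 y)).
  pose proof (pow_le_1 (Cmod y) m (conj (Cmod_ge_0 y) hy)).
  pose proof (Cmod_half_phi_term_le q m hq). pose proof (Cmod_ge_0 ((- 1) ^ m * q ^ (2 * (m * m)))%C).
  nra.
Qed.

Lemma is_Cseries_ptheta (y : C) : Cmod y <= 1 ->
  is_Cseries (fun m => (- 1) ^ m * q ^ (2 * (m * m)) * y ^ m)%C (ptheta y).
Proof.
  intro hy. apply (is_Cseries_geom (Cmod q) (conj hq0 hq) 1). intro; now apply ptheta_term_Cmod_le.
Qed.

Lemma ptheta_Cmod_le (y : C) : Cmod y <= 1 -> Cmod (ptheta y) <= 1 / (1 - Cmod q).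
Proof.
  intro hy. apply (series_Cmod_geom (Cmod q) (conj hq0 hq) 1). intro; now apply ptheta_term_Cmod_le.
Qed.

Lemma ptheta_rec (y : C) : Cmod y <= 1 -> ptheta y = (1 - q ^ 2 * y * ptheta (q ^ 4 * y))%C.
Proof.
  intro hy.
  assert (hy4 : Cmod (q ^ 4 * y)%C <= 1).
  { rewrite Cmod_mult, Cmod_pow. pose proof (pow_le_1 (Cmod q) 4 ltac:(lra)).
    pose proof (Cmod_ge_0 y). pose proof (pow_le (Cmod q) 4 hq0). nra. }
  apply (is_lim_Cseq_unique (fun n => psum (fun m => (- 1) ^ m * q ^ (2 * (m * m)) * y ^ m)%C (S n))).
  - now apply is_lim_Cseq_incr_1, is_Cseries_ptheta.
  - apply (is_lim_Cseq_ext (fun n => 1 + (- (q ^ 2 * y)) *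
             psum (fun m => (- 1) ^ m * q ^ (2 * (m * m)) * (q ^ 4 * y) ^ m)%C n)%C).
    + intro n. rewrite psum_first, <- psum_scal. f_equal; [simpl; ring |].
      apply psum_ext. intros i _.
      replace (2 * (S i * S i))%nat with (2 * (i * i) + 4 * i + 2)%nat by nia.
      rewrite !Cpow_add_r, !Cpow_mult_l, <- Cpow_mult_r, !Cpow_S. ring.
    + replace (1 - q ^ 2 * y * ptheta (q ^ 4 * y))%C with (1 + (- (q ^ 2 * y)) * ptheta (q ^ 4 * y))%C
        by ring.
      apply is_lim_Cseq_plus; [apply is_lim_Cseq_const |].
      now apply is_lim_Cseq_scal, is_Cseries_ptheta.
Qed.

Definition ptheta_pow (j : nat) : C := ptheta ((q ^ 2) ^ j)%C.

Lemma Cmod_q2_pow_le_1 (j : nat) : Cmod ((q ^ 2) ^ j)%C <= 1.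
Proof.
  rewrite Cmod_pow. apply pow_le_1. split; [apply Cmod_ge_0 | left; now apply Cmod_pow_S_lt_1].
Qed.

Lemma ptheta_pow_rec (j : nat) : ptheta_pow j = (1 - q ^ 2 * (q ^ 2) ^ j * ptheta_pow (S (S j)))%C.
Proof. unfold ptheta_pow. rewrite ptheta_rec by apply Cmod_q2_pow_le_1. do 3 f_equal. simpl. ring. Qed.

Lemma ptheta_pow_0 : ptheta_pow O = half_phi q.
Proof.
  unfold ptheta_pow, ptheta, half_phi. f_equal. extensionality m. simpl. rewrite Cpow_1_l. ring.
Qed.


Lemma ptheta_pow_Cmod_le (j : nat) : Cmod (ptheta_pow j) <= 1 / (1 - Cmod q).
Proof. apply ptheta_Cmod_le, Cmod_q2_pow_le_1. Qed.

Lemma inner_series (D n : nat) :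
  series (fun m => (- 1) ^ m * (q ^ (D + 2 * n * m + 2 * m * m + 2 * m) * (1 + q ^ (2 * m + 1))))%C
  = (q ^ D * (ptheta_pow (S n) + q * ptheta_pow (S (S n))))%C.
Proof.
  apply series_correct.
  apply (is_lim_Cseq_ext (fun N => q ^ D *
           (psum (fun m => (- 1) ^ m * q ^ (2 * (m * m)) * ((q ^ 2) ^ S n) ^ m)%C N
            + q * psum (fun m => (- 1) ^ m * q ^ (2 * (m * m)) * ((q ^ 2) ^ S (S n)) ^ m)%C N))%C).
  - intro N. rewrite <- psum_scal, <- psum_plus, <- psum_scal. apply psum_ext. intros m _.
    rewrite <- !Cpow_mult_r.
    replace (D + 2 * n * m + 2 * m * m + 2 * m)%nat with (D + 2 * (m * m) + 2 * (S n * m))%nat by nia.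
    replace (2 * (S (S n) * m))%nat with (2 * m + 2 * (S n * m))%nat by nia.
    rewrite !Cpow_add_r, Cpow_1_r. ring.
  - apply is_lim_Cseq_scal, is_lim_Cseq_plus; [| apply is_lim_Cseq_scal];
      apply is_Cseries_ptheta, Cmod_q2_pow_le_1.
Qed.

Definition row (n : nat) : C :=
  (q ^ Nat.div (n * (n + 3)) 2 * (ptheta_pow (S n) + q * ptheta_pow (S (S n))))%C.

Definition potential (n : nat) : C :=
  (q ^ tri (S n) * (- ptheta_pow n + (q ^ n - 1) * ptheta_pow (S n)
                    + q ^ (n + 2) * ptheta_pow (S (S n)) + 2))%C.

Lemma row_telescope (n : nat) :
  ((1 + q) * row n = 2 * q ^ tri (S (S n)) + potential n - potential (S n))%C.
Proof.
  unfold row, potential.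
  replace (Nat.div (n * (n + 3)) 2) with (tri (S n) + n)%nat.
  2: { pose proof (tri_spec (S n)). apply Nat.div_unique_exact; [lia | simpl tri in *; nia]. }
  change (tri (S (S n))) with (tri (S n) + S n)%nat.
  rewrite (ptheta_pow_rec n), (ptheta_pow_rec (S n)).
  change ((q ^ 2) ^ S n)%C with (q ^ 2 * (q ^ 2) ^ n)%C.
  replace ((q ^ 2) ^ n)%C with (q ^ n * q ^ n)%C
    by (rewrite <- Cpow_mult_r, <- Cpow_add_r; f_equal; lia).
  replace (S n + 2)%nat with (S (S (S n))) by lia.
  rewrite !Cpow_add_r, !Cpow_S. ring.
Qed.

Lemma is_lim_potential : is_lim_Cseq potential (RtoC 0).
Proof.
  set (G := 1 / (1 - Cmod q)). assert (hG : 0 <= G) by (apply Rdiv_le_0_compat; lra).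
  apply (is_lim_Cseq_geom _ _ (4 * G + 2) (Cmod q) (conj hq0 hq)). intro n.
  replace (potential n - 0)%C with (potential n) by ring.
  unfold potential. rewrite Cmod_mult, Cmod_pow, Rmult_comm.
  apply Rmult_le_compat; [apply Cmod_ge_0 | apply pow_le; lra | |].
  - pose proof (ptheta_pow_Cmod_le n). pose proof (ptheta_pow_Cmod_le (S n)).
    pose proof (ptheta_pow_Cmod_le (S (S n))).
    fold G in H, H0, H1.
    pose proof (pow_le_1 (Cmod q) n ltac:(lra)). pose proof (pow_le_1 (Cmod q) (n + 2) ltac:(lra)).
    pose proof (pow_le (Cmod q) n hq0). pose proof (pow_le (Cmod q) (n + 2) hq0).
    pose proof (Cmod_ge_0 (ptheta_pow (S n))). pose proof (Cmod_ge_0 (ptheta_pow (S (S n)))).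
    assert (Cmod (q ^ n - 1)%C <= 2).
    { eapply Rle_trans; [apply Cmod_triangle |]. rewrite Cmod_opp, Cmod_1, Cmod_pow. lra. }
    assert (Cmod (q ^ n - 1)%C * Cmod (ptheta_pow (S n)) <= 2 * G)
      by (apply Rmult_le_compat; try lra; apply Cmod_ge_0).
    assert (Cmod q ^ (n + 2) * Cmod (ptheta_pow (S (S n))) <= 1 * G) by (apply Rmult_le_compat; lra).
    eapply Rle_trans; [apply Cmod_triangle |].
    eapply Rle_trans; [apply Rplus_le_compat_r, Cmod_triangle |].
    eapply Rle_trans; [apply Rplus_le_compat_r, Rplus_le_compat_r, Cmod_triangle |].
    rewrite Cmod_opp, !Cmod_mult, Cmod_pow.
    replace (Cmod 2) with 2 by (rewrite Cmod_R, Rabs_right; lra). lra.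
  - apply pow_le_pow_le_1; [lra | apply tri_S_ge].
Qed.

Lemma series_row : series row = ((2 * psi q + 1 - 2 * half_phi q) / (1 + q))%C.
Proof.
  pose proof one_plus_q_neq_0. apply series_correct.
  apply (is_lim_Cseq_ext (fun N => / (1 + q) * psum (fun n => (1 + q) * row n) N)%C).
  { intro N. rewrite psum_scal. field. auto. }
  replace ((2 * psi q + 1 - 2 * half_phi q) / (1 + q))%C
    with (/ (1 + q) * (2 * (psi q - 1) + potential O - 0))%C.
  2: { assert (E0 : (q ^ 2 * ptheta_pow 2 = 1 - half_phi q)%C)
         by (rewrite <- ptheta_pow_0, (ptheta_pow_rec O); simpl; ring).
       unfold potential. rewrite ptheta_pow_0. simpl (0 + 2)%nat. rewrite E0. simpl. field. auto. }
  apply is_lim_Cseq_scal.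
  apply (is_lim_Cseq_ext
           (fun N => 2 * psum (fun n => q ^ tri (S (S n))) N + potential O - potential N)%C).
  { intro N. induction N; [simpl; ring |]. rewrite !psum_S, <- IHN, row_telescope. ring. }
  apply is_lim_Cseq_minus;
    [apply is_lim_Cseq_plus; [apply is_lim_Cseq_scal | apply is_lim_Cseq_const] |].
  - apply (is_lim_Cseq_ext (fun N => psum (fun j => q ^ tri (S j)) (S N) - 1)%C).
    { intro N. rewrite psum_first. simpl. ring. }
    apply (is_lim_Cseq_minus _ (fun _ => RtoC 1)); [| apply is_lim_Cseq_const].
    now apply is_lim_Cseq_incr_1, is_Cseries_psi.
  - exact is_lim_potential.
Qed.

Lemma double_series :
  Csum (fun n => Csum (fun m =>
    Cmul (Cpow (Copp Cone) m)
         (Cmul (Cpow q (Nat.div (n * (n + 3)) 2 + 2 * n * m + 2 * m * m + 2 * m))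
               (Cadd Cone (Cpow q (2 * m + 1)))))) =
  ((2 * psi q + 1 - 2 * half_phi q) / (1 + q))%C.
Proof.
  rewrite Csum_series, Cpow_Defs, <- series_row. f_equal. extensionality n.
  change Cone with (RtoC 1). rewrite <- RtoC_opp. now apply inner_series.
Qed.

End DoubleSeries.

(** * The left-hand side *)

Section LeftSide.

Variable q : C.
Hypothesis hq : Cmod q < 1.

Let hq2 : Cmod (q ^ 2)%C < 1 := Cmod_pow_S_lt_1 q 1 hq.

Definition tail (k : nat) : C := poch_inf (- (q ^ 2) ^ k) (q ^ 2).

Lemma tail_shift (k : nat) : tail k = ((1 + (q ^ 2) ^ k) * tail (S k))%C.
Proof.
  unfold tail. rewrite poch_inf_shift by exact hq2.
  replace (- (q ^ 2) ^ k * q ^ 2)%C with (- (q ^ 2) ^ S k)%C by (simpl; ring).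
  f_equal. ring.
Qed.

Lemma is_lim_tail : is_lim_Cseq tail (RtoC 1).
Proof.
  set (s := Cmod (q ^ 2)%C). assert (hs : 0 <= s < 1) by (split; [apply Cmod_ge_0 | exact hq2]).
  apply (is_lim_Cseq_geom _ _ (exp (1 / (1 - s)) / (1 - s)) s hs). intro k.
  eapply Rle_trans; [apply poch_inf_sub_1_Cmod_le, hq2 |]. fold s.
  rewrite Cmod_opp, Cmod_pow. fold s.
  pose proof (pow_le s k ltac:(lra)). pose proof (pow_le_1 s k ltac:(lra)).
  replace (exp (1 / (1 - s)) / (1 - s) * s ^ k) with (exp (1 / (1 - s)) * s ^ k / (1 - s))
    by (field; lra).
  unfold Rdiv. apply Rmult_le_compat_r; [left; apply Rinv_0_lt_compat; lra |].
  apply Rmult_le_compat_r; [lra |]. apply exp_le_exp.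
  apply Rmult_le_compat_r; [left; apply Rinv_0_lt_compat |]; lra.
Qed.

Lemma F_ed_od_opp :
  F_ed_od (Copp q) = (- q / (1 + q) * (2 * poch_inf (- q ^ 2) (q ^ 2) - poch_inf q (q ^ 2)))%C.
Proof.
  pose proof (one_plus_q_neq_0 q hq).
  unfold F_ed_od. rewrite Csum_series, qpoch_inf_poch_inf, qpoch_poch, Cpow_Defs.
  change Cmul with Cmult. change Copp with Complex.Copp.
  apply series_correct.
  set (D := fun k => (poch q (q ^ 2) k * tail k)%C).
  apply (is_lim_Cseq_ext (fun N => - q / (1 + q) * (D O - D N))%C).
  { intro N. replace (D O - D N)%C with (- D N - - D O)%C by ring.
    rewrite <- (psum_telescope (fun k => - D k)%C), <- psum_scal.
    apply psum_ext. intros i _. unfold D. rewrite (tail_shift i), poch_S. unfold tail.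
    replace (- - q)%C with q by ring. replace ((- q) ^ 2)%C with (q ^ 2)%C by ring.
    replace (2 * i + 2)%nat with (2 * S i)%nat by lia.
    rewrite Cpow_add_r, !Cpow_mult_r. replace ((- q) ^ 2)%C with (q ^ 2)%C by ring.
    field. auto. }
  apply is_lim_Cseq_scal, is_lim_Cseq_minus.
  - replace (2 * poch_inf (- q ^ 2) (q ^ 2))%C with (D O); [apply is_lim_Cseq_const |].
    unfold D, tail. simpl poch. rewrite poch_inf_shift by exact hq2.
    replace (- (q ^ 2) ^ 0 * q ^ 2)%C with (- q ^ 2)%C by (simpl; ring). simpl. ring.
  - replace (poch_inf q (q ^ 2)) with (poch_inf q (q ^ 2) * 1)%C by ring.
    apply is_lim_Cseq_mult; [now apply is_lim_poch | exact is_lim_tail].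
Qed.

End LeftSide.

Theorem mainTheorem5 (q : Cpx) (hq : Cnorm q < 1) :
  F_ed_od (Copp q) =
  Cmul
    (Copp (Cdiv (Cmul q (Cmul (qpoch_inf q q) (qpoch_inf (Copp (Cpow q 2)) (Cpow q 2))))
                (Cpow (qpoch_inf (Cpow q 2) (Cpow q 2)) 2)))
    (Csum (fun n => Csum (fun m =>
       Cmul (Cpow (Copp Cone) m)
            (Cmul (Cpow q (Nat.div (n * (n + 3)) 2 + 2 * n * m + 2 * m * m + 2 * m))
                  (Cadd Cone (Cpow q (2 * m + 1))))))).
Proof.
  change Cnorm with Cmod in hq. change Cpx with C in q |- *.
  rewrite F_ed_od_opp, double_series, qpoch_inf_poch_inf, Cpow_Defs by exact hq.
  change Cmul with Cmult. change Cdiv with Complex.Cdiv. change Copp with Complex.Copp.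
  destruct (Ceq_dec q 0) as [-> | hq0]; [unfold Complex.Cdiv; ring |].
  rewrite (poch_inf_parity q q hq). replace (q * q)%C with (q ^ 2)%C by ring.
  pose proof (poch_inf_neq_0 (q ^ 2) (q ^ 2) (Cmod_pow_S_lt_1 q 1 hq) (Cmod_pow_S_lt_1 q 1 hq)).
  pose proof (one_plus_q_neq_0 q hq).
  pose proof (psi_mul_poch_inf q hq0 hq) as Hpsi. pose proof (half_phi_mul_poch_inf q hq0 hq) as Hphi.
  set (Y := poch_inf (q ^ 2) (q ^ 2)) in *. set (O := poch_inf q (q ^ 2)) in *.
  set (E := poch_inf (- q ^ 2) (q ^ 2)) in *.
  transitivity (- q / (1 + q) * (2 * E * (psi q * O) - O * ((2 * half_phi q - 1) * E)) / Y)%C.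
  - rewrite Hpsi, Hphi. field. auto.
  - field. auto.
Qed.
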